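(* Every finite forest satisfies the bunkbed conjecture: for every forest $T$, every symmetric weight $\mu$ on $BB(T)$, and all $x,y\in V(T)$, $\mathbb P_{BB(T),\mu}(x^-\sim y^-)\ge \mathbb P_{BB(T),\mu}(x^-\sim y^+)$.
   Context: For a graph $G$, a weight is a function $\mu\colon E(G)\to[0,1]$; the associated edge-percolation probability space has sample space $\mathscr P(E(G))$, with $\mathbb P_{G,\mu}(X)=\prod_{e\in X}\mu(e)\prod_{e\notin X}(1-\mu(e))$ for $X\subseteq E(G)$, i.e. each edge $e$ is independently open with probability $\mu(e)$. For vertices $x,y$, $(x\sim y)$ is the event that $x$ and $y$ are joined by a path of open edges. The bunkbed graph $BB(G)=G\,\Box\,K_2$ has vertex set $V(G)\times\{0,1\}$, writing $x^-=(x,0)$, $x^+=(x,1)$, with edges $x^-y^-$ and $x^+y^+$ for every $xy\in E(G)$ and vertical edges $x^-x^+$ for every $x\in V(G)$. A weight $\mu$ on $BB(G)$ is symmetric if $\mu(x^-y^-)=\mu(x^+y^+)$ for every $xy\in E(G)$. *)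

From mathcomp Require Import all_boot all_order all_algebra.
Set Implicit Arguments. Unset Strict Implicit. Unset Printing Implicit Defensive.
Import Order.TTheory GRing.Theory Num.Theory.
Local Open Scope ring_scope.

Definition simple_graph (T : finType) (e : rel T) : Prop :=
  symmetric e /\ irreflexive e.

Definition edges (T : finType) (e : rel T) : {set {set T}} :=
  [set [set x; y] | x in T, y in T & e x y].

Definition forest (T : finType) (e : rel T) : Prop :=
  forall s : seq T, uniq s -> (2 < size s)%N -> ~~ cycle e s.

Definition config_prob (R : numDomainType) (T : finType) (e : rel T)
    (mu : {set T} -> R) (X : {set {set T}}) : R :=
  \prod_(f in edges e) (if f \in X then mu f else 1 - mu f).

Definition perc_prob (R : numDomainType) (T : finType) (e : rel T)
    (mu : {set T} -> R) (A : pred {set {set T}}) : R :=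
  \sum_(X : {set {set T}} | (X \subset edges e) && A X) config_prob e mu X.

Definition joined (T : finType) (X : {set {set T}}) (x y : T) : bool :=
  connect (fun u v => [set u; v] \in X) x y.

(* Bunkbed graph BB(G) = G \Box K_2 on V * bool; x^- = (x,false), x^+ = (x,true). *)
Definition bunkbed (V : finType) (e : rel V) : rel (V * bool) :=
  fun u v => ((u.2 == v.2) && e u.1 v.1) || ((u.1 == v.1) && (u.2 != v.2)).

Definition lower (V : Type) (x : V) : V * bool := (x, false).
Definition upper (V : Type) (x : V) : V * bool := (x, true).

Definition weight (R : numDomainType) (T : finType) (e : rel T)
    (mu : {set T} -> R) : Prop :=
  forall f, f \in edges e -> 0 <= mu f <= 1.

Definition symmetric_weight (R : numDomainType) (V : finType) (e : rel V)
    (mu : {set V * bool} -> R) : Prop :=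
  forall x y, e x y ->
    mu [set lower x; lower y] = mu [set upper x; upper y].

From mathcomp Require Import all_boot all_order all_algebra.
Set Implicit Arguments. Unset Strict Implicit. Unset Printing Implicit Defensive.
Import Order.TTheory GRing.Theory Num.Theory.

(* For a configuration X, let D be the set of vertices both of whose copies
   are joined to x^-, and U the component of x in T - D.  Swapping the two
   layers on every edge with both ends outside U is measure preserving (the
   weight is symmetric), and it preserves D, hence U, so it is an involution.
   Since T is a forest, U sends a single edge into each component of its
   complement, so a path from x^- that leaves U can only come back through
   the edge it left by; hence the vertices of U are reached from x^- in the
   lower layer only, while outside U the cluster of x^- is mirrored by the
   swap.  So the swap maps the event (x^- ~ y^+) into the event (x^- ~ y^-). *)

Lemma connect_last_ind (T : finType) (r : rel T) (a : T) (P : T -> Prop) :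
  P a -> (forall b c, connect r a b -> P b -> r b c -> P c) ->
  forall b, connect r a b -> P b.
Proof.
move=> Pa IH b /connectP [p]; elim/last_ind: p b => [|p z IHp] b; first by move=> _ ->.
rewrite rcons_path last_rcons => /andP [pth rz] ->.
apply: IH rz; first by apply/connectP; exists p.
exact: IHp.
Qed.

Lemma homo_connect (T1 T2 : finType) (r1 : rel T1) (r2 : rel T2) (f : T1 -> T2) :
  (forall u v, r1 u v -> connect r2 (f u) (f v)) ->
  forall a b, connect r1 a b -> connect r2 (f a) (f b).
Proof.
move=> r12 a; apply: connect_last_ind => [|b c _ ab /r12]; first exact: connect0.
exact: connect_trans.
Qed.

Lemma connect_subrel (T : finType) (r1 r2 : rel T) :
  subrel r1 r2 -> subrel (connect r1) (connect r2).
Proof. by move=> r12; apply: connect_sub => u v /r12; apply: connect1. Qed.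

Section Forest.
Variables (V : finType) (e : rel V).
Hypotheses (e_sym : symmetric e) (e_irr : irreflexive e) (e_forest : forest e).

Definition del_edge (a b : V) : rel V :=
  [rel u v | e u v && ([set u; v] != [set a; b])].

Lemma forest_bridge a b : e a b -> ~~ connect (del_edge a b) a b.
Proof.
move=> eab; apply/negP => /connectP [p pth lastp].
move: eab lastp; case: (shortenP pth) => p' pth' uq _ eab lastp.
have del_e : subrel (del_edge a b) e by move=> u v /andP [].
case: p' pth' uq eab lastp => [|z [|z' p']] /= pth' uq eab lb.
- by rewrite lb e_irr in eab.
- by move: pth'; rewrite -lb /= /del_edge /= eqxx !andbF.
- have /negP [] := e_forest (s := [:: a, z, z' & p']) uq isT.
  have pth'' : path e a [:: z, z' & p'] by apply: (sub_path del_e); exact: pth'.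
  by rewrite /cycle rcons_path pth'' /= -lb e_sym.
Qed.

Definition induced (S : {set V}) : rel V := [rel u v | [&& e u v, u \in S & v \in S]].

Lemma induced_sym S : symmetric (induced S).
Proof. by move=> u v; rewrite /induced /= e_sym (andbC (u \in S)). Qed.

Definition component (S : {set V}) (x : V) : {set V} :=
  [set u in S | connect (induced S) x u].

Section Component.
Variables (S : {set V}) (x : V).

Lemma component_sub : component S x \subset S.
Proof. by apply/subsetP => u; rewrite inE => /andP []. Qed.

Lemma mem_component_root : (x \in component S x) = (x \in S).
Proof. by rewrite inE connect0 andbT. Qed.

Lemma component_root u : u \in component S x -> x \in component S x.
Proof.
rewrite mem_component_root inE => /andP [uS /connectP [[|z p] /= pth uE]].
  by rewrite -uE.
by case/andP: pth => /and3P [].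
Qed.

Lemma component_boundary u w :
  u \in component S x -> e u w -> w \notin component S x -> w \notin S.
Proof.
rewrite !inE => /andP [uS xu] euw; apply: contra => wS; rewrite wS.
by apply: connect_trans xu (connect1 _); rewrite /induced /= euw uS wS.
Qed.

Lemma component_connected :
  {in component S x &, forall u v, connect (induced (component S x)) u v}.
Proof.
suff from_x u : u \in component S x -> connect (induced (component S x)) x u.
  move=> u v /from_x xu /from_x xv; apply: connect_trans xv.
  by rewrite (sym_connect_sym (induced_sym _)).
rewrite inE => /andP [_]; move: u.
apply: (connect_last_ind (P := connect _ x)) => [|b c xb xb' bc]; first exact: connect0.
have xc : connect (induced S) x c := connect_trans xb (connect1 bc).
move: bc => /and3P [ebc bS cS]; apply: connect_trans xb' (connect1 _).
by rewrite /induced /= ebc !inE bS cS xb xc.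
Qed.
End Component.

Lemma forest_unique_exit (U : {set V}) u0 d0 u1 d1 :
  {in U &, forall u v, connect (induced U) u v} ->
  u0 \in U -> u1 \in U -> d0 \notin U -> d1 \notin U -> e u0 d0 -> e u1 d1 ->
  connect (induced (~: U)) d0 d1 -> u1 = u0 /\ d1 = d0.
Proof.
move=> Uconn u0U u1U d0U d1U e0 e1 c01.
(* Otherwise d0 ~ d1 -- u1 ~ u0 reconnects d0 and u0 without the edge d0 u0. *)
case: (eqVneq [set d1; u1] [set d0; u0]) => [eq10 | ne].
  have /set2P [d10 | d1u0] : d1 \in [set d0; u0] by rewrite -eq10 set21.
    have /set2P [u1d0 | //] : u1 \in [set d0; u0] by rewrite -eq10 set22.
    by rewrite -u1d0 u1U in d0U.
  by rewrite d1u0 u0U in d1U.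
have avoid_del u v w :
    w \in [set d0; u0] -> w \notin [set u; v] -> [set u; v] != [set d0; u0].
  by move=> w0 wuv; apply: contraNneq wuv => ->.
have e0' : e d0 u0 by rewrite e_sym.
case/negP: (forest_bridge e0').
apply: (connect_trans (y := d1)); last apply: (connect_trans (y := u1)).
- apply: connect_subrel c01 => u v /and3P [euv uU vU]; rewrite /del_edge /= euv.
  apply: (avoid_del _ _ u0); rewrite ?set22 // !inE; apply/norP.
  by split; [move: uU | move: vU]; apply: contraTneq => <-; rewrite inE negbK.
- by apply: connect1; rewrite /del_edge /= e_sym e1.
- apply: connect_subrel (Uconn _ _ u1U u0U) => u v /and3P [euv uU vU].
  rewrite /del_edge /= euv; apply: (avoid_del _ _ d0); rewrite ?set21 // !inE.
  by apply/norP; split; apply: contraNneq d0U => ->.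
Qed.

End Forest.

Lemma mem_edges (T : finType) (r : rel T) : symmetric r -> irreflexive r ->
  forall a b, ([set a; b] \in edges r) = r a b.
Proof.
move=> rsym rirr a b; apply/imset2P/idP => [[c d _] | rab]; last first.
  by exists a b; rewrite ?inE.
rewrite inE => /andP [_ rcd] cd_ab.
have [c_ab d_ab] : c \in [set a; b] /\ d \in [set a; b] by rewrite cd_ab set21 set22.
by move: rcd; case/set2P: c_ab => ->; case/set2P: d_ab => -> //; rewrite ?rirr // rsym.
Qed.

Section Bunkbed.
Variables (V : finType) (e : rel V).
Local Notation BT := (V * bool)%type.
Local Notation E := (edges (bunkbed e)).
Implicit Types (W S : {set V}) (X : {set {set BT}}) (a b c : BT).

Lemma bunkbed_sym : symmetric e -> symmetric (bunkbed e).
Proof. by move=> e_sym [a i] [b j]; rewrite /bunkbed /= e_sym (eq_sym a) (eq_sym i). Qed.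

Lemma bunkbed_irr : irreflexive e -> irreflexive (bunkbed e).
Proof. by move=> e_irr [a i]; rewrite /bunkbed /= e_irr !eqxx. Qed.

Lemma bunkbedP a b : bunkbed e a b ->
  (a.2 = b.2 /\ e a.1 b.1) \/ (a.1 = b.1 /\ a.2 = ~~ b.2).
Proof.
case: a b => [a i] [b j] /orP [/andP [/eqP -> ->]|/andP [/eqP -> /=]]; first by left.
by case: i j => [] [] //= _; right.
Qed.

Definition open_edge (X : {set {set BT}}) : rel BT := fun a b => [set a; b] \in X.

Lemma open_edgeC X : symmetric (open_edge X).
Proof. by move=> a b; rewrite /open_edge setUC. Qed.

Definition open_within (S : {set V}) X : rel BT :=
  [rel a b | [&& open_edge X a b, a.1 \in S & b.1 \in S]].

Definition flip (W : {set V}) (c : BT) : BT := (c.1, (c.1 \in W) (+) c.2).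

Lemma flipK W : involutive (flip W).
Proof. by move=> [v b]; rewrite /flip /= addKb. Qed.

Lemma flip_out W c : c.1 \notin W -> flip W c = c.
Proof. by case: c => v b /negbTE; rewrite /flip /= => ->. Qed.

Lemma flip_in W v (b : bool) : v \in W -> flip W (v, b) = (v, ~~ b).
Proof. by rewrite /flip /= => ->. Qed.

Lemma bunkbed_flip W a b : a.1 \in W -> b.1 \in W ->
  bunkbed e (flip W a) (flip W b) = bunkbed e a b.
Proof. by case: a b => [u i] [v j] /= uW vW; rewrite !flip_in //; case: i j => [] []. Qed.

Definition flip_edge W (f : {set BT}) : {set BT} :=
  if f \subset [set c | c.1 \in W] then flip W @: f else f.

Lemma flip_edge_pair W a b : flip_edge W [set a; b] =
  if (a.1 \in W) && (b.1 \in W) then [set flip W a; flip W b] else [set a; b].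
Proof. by rewrite /flip_edge subUset !sub1set !inE imsetU !imset_set1. Qed.

Lemma flip_edgeK W : involutive (flip_edge W).
Proof.
move=> f; rewrite {2}/flip_edge; case: ifPn => fW; last by rewrite /flip_edge (negbTE fW).
rewrite /flip_edge ifT; first by rewrite -imset_comp (eq_imset _ (flipK W)) imset_id.
by apply/subsetP => _ /imsetP [c cf ->]; move/subsetP: fW => /(_ c cf); rewrite !inE.
Qed.

Lemma flip_edge_edges W f : f \in E -> flip_edge W f \in E.
Proof.
case/imset2P => a b _; rewrite inE => /andP [_ ab] ->; rewrite flip_edge_pair.
case: ifP => [/andP [aW bW] | _]; apply/imset2P; last by exists a b; rewrite ?inE.
by exists (flip W a) (flip W b); rewrite ?inE ?bunkbed_flip.
Qed.

Definition flip_config W (X : {set {set BT}}) := flip_edge W @: X.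

Lemma flip_configK W : involutive (flip_config W).
Proof.
by move=> X; rewrite /flip_config -imset_comp (eq_imset _ (flip_edgeK W)) imset_id.
Qed.

Lemma mem_flip_config W X f : (flip_edge W f \in flip_config W X) = (f \in X).
Proof. exact/mem_imset/can_inj/flip_edgeK. Qed.

Lemma flip_config_sub W X : X \subset E -> flip_config W X \subset E.
Proof.
by move/subsetP => XE; apply/subsetP => _ /imsetP [f /XE fE ->]; apply: flip_edge_edges.
Qed.

Lemma open_flip_config W X a b : open_edge (flip_config W X) a b =
  if (a.1 \in W) && (b.1 \in W) then open_edge X (flip W a) (flip W b)
  else open_edge X a b.
Proof.
rewrite /open_edge -{1}(flip_edgeK W [set a; b]) mem_flip_config flip_edge_pair.
by case: ifP.
Qed.

Lemma connect_within_flip W X a b : connect (open_within W X) a b ->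
  connect (open_edge (flip_config W X)) (flip W a) (flip W b).
Proof.
apply: homo_connect => u v /and3P [uv uW vW]; apply: connect1.
by rewrite open_flip_config uW vW !flipK.
Qed.

Lemma connect_outside_flip W X a b : connect (open_within (~: W) X) a b ->
  connect (open_edge (flip_config W X)) a b.
Proof.
apply: connect_subrel => u v /and3P [uv]; rewrite inE => /negbTE uW _.
by rewrite open_flip_config uW.
Qed.

End Bunkbed.

Section Switching.
Variables (V : finType) (e : rel V).
Hypotheses (e_sym : symmetric e) (e_irr : irreflexive e) (e_forest : forest e).
Variable x : V.
Local Notation BT := (V * bool)%type.
Local Notation E := (edges (bunkbed e)).
Implicit Types (W S : {set V}) (X Y : {set {set BT}}) (a b c : BT).

Definition reach X c := connect (open_edge X) (lower x) c.

Definition doubled X : {set V} := [set v | reach X (lower v) && reach X (upper v)].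

Definition side X : {set V} := component e (~: doubled X) x.

Lemma reach_step X b c : reach X b -> open_edge X b c -> reach X c.
Proof. by move=> xb bc; apply: connect_trans xb (connect1 bc). Qed.

Lemma reach_doubled X c : c.1 \in doubled X -> reach X c.
Proof. by case: c => v [] /=; rewrite inE => /andP []. Qed.

Lemma reach_within S X c : connect (open_within S X) (lower x) c -> reach X c.
Proof. by apply: connect_subrel => a b /andP []. Qed.

Lemma open_bunkbed X a b : X \subset E -> open_edge X a b -> bunkbed e a b.
Proof.
by move/subsetP=> XE /XE; rewrite mem_edges //; [apply: bunkbed_sym | apply: bunkbed_irr].
Qed.

Lemma open_base X a b : X \subset E -> open_edge X a b -> a.1 != b.1 -> e a.1 b.1.
Proof. by move=> XE /(open_bunkbed XE)/bunkbedP [[_ ->] | [->]] //; rewrite eqxx. Qed.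

Lemma connect_within_base S X a b : X \subset E ->
  connect (open_within S X) a b -> connect (induced e S) a.1 b.1.
Proof.
move=> XE; apply: homo_connect => u v /and3P [/(open_bunkbed XE)/bunkbedP uv uS vS].
case: uv => [[_ euv] | [-> _]]; last exact: connect0.
by apply: connect1; rewrite /induced /= euv uS vS.
Qed.

Lemma reach_flip_config Y W c : Y \subset E ->
  (x \notin W) || (x \in doubled Y) ->
  (forall u w, u \notin W -> w \in W -> e u w -> w \in doubled Y) ->
  reach (flip_config W Y) c -> reach Y (flip W c).
Proof.
move=> YE hx hbd.
have cross a b : a.1 \notin W -> b.1 \in W -> open_edge Y a b -> b.1 \in doubled Y.
  move=> aW bW ab; have ab1 : a.1 != b.1 by apply: contraNneq aW => ->.
  exact: hbd aW bW (open_base YE ab ab1).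
move: c; apply: (connect_last_ind (P := fun c => reach Y (flip W c))) => [|b c _ Yb].
  case/orP: hx => [xW | xD]; last exact: reach_doubled.
  by rewrite flip_out //; apply: connect0.
rewrite open_flip_config; case: ifPn => [/andP [bW cW] | bcW bc]; first exact: reach_step.
have {}Yb : reach Y b.
  case: (boolP (b.1 \in W)) => bW; last by rewrite -(flip_out bW).
  have cW : c.1 \notin W by rewrite bW in bcW.
  have bD : b.1 \in doubled Y by apply: (cross c) => //; rewrite open_edgeC.
  exact: reach_doubled.
have Yc := reach_step Yb bc.
case: (boolP (c.1 \in W)) => cW; last by rewrite flip_out.
have bW : b.1 \notin W by rewrite cW andbT in bcW.
by apply: reach_doubled; apply: (cross b c bW cW bc).
Qed.

Lemma mem_side_root X : (x \in side X) = (x \notin doubled X).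
Proof. by rewrite mem_component_root inE. Qed.

Lemma side_doubled X u : u \in side X -> u \notin doubled X.
Proof. by move/(subsetP (component_sub _ _ _)); rewrite inE. Qed.

Lemma side_boundary X u w : u \in side X -> w \notin side X -> e u w -> w \in doubled X.
Proof. by move=> uU wU euw; have := component_boundary uU euw wU; rewrite inE negbK. Qed.

Lemma side_unique_exit X u0 d0 u1 d1 :
  u0 \in side X -> u1 \in side X -> d0 \notin side X -> d1 \notin side X ->
  e u0 d0 -> e u1 d1 -> connect (induced e (~: side X)) d0 d1 -> u1 = u0 /\ d1 = d0.
Proof. exact/forest_unique_exit/component_connected. Qed.

Section Configuration.
Variable X : {set {set BT}}.
Hypothesis XE : X \subset E.
Local Notation U := (side X).

Lemma side_path_lower c : connect (open_within U X) (lower x) c -> c.2 = false.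
Proof.
move: c; apply: (connect_last_ind (P := fun c => c.2 = false)) => // b c xb b2.
case/and3P=> bc bU cU; case/(open_bunkbed XE)/bunkbedP: (bc) => [[<-] // | [bc1 bc2]].
have bD : b.1 \in doubled X.
  have xb' := reach_within xb; have xc := reach_step xb' bc.
  move: xb' xc; case: b c bc1 bc2 b2 {xb bc bU cU} => v i [w j] /= <- ->.
  by case: j => //= _ xv xv'; rewrite inE xv xv'.
by have := side_doubled bU; rewrite bD.
Qed.

Lemma reach_side c : x \in U -> reach X c ->
  if c.1 \in U then (connect (open_within U X) (lower x) c : Prop)
  else exists u d, [/\ connect (open_within U X) (lower x) (lower u), u \in U,
    d \notin U, open_edge X (lower u) (lower d)
    & connect (open_within (~: U) X) (lower d) c].
Proof.
move=> xU; move: c; apply: (connect_last_ind (P := fun c => if c.1 \in U then _ else _)).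
  by rewrite /= xU; apply: connect0.
move=> b c xb IHb bc; have bbc := bunkbedP (open_bunkbed XE bc).
case: (boolP (b.1 \in U)) IHb => bU IHb; case: (boolP (c.1 \in U)) => cU.
- by apply: connect_trans IHb (connect1 _); rewrite /open_within /= bc bU cU.
- have b2 := side_path_lower IHb.
  case: bbc => [[c2 _] | [bc1 _]]; last by rewrite -bc1 bU in cU.
  have lower_fst a : a.2 = false -> lower a.1 = a by case: a => ? [].
  exists b.1, c.1; rewrite !lower_fst -?c2 //; split => //; exact: connect0.
- (* Re-entering U uses the exit edge, in the lower layer, or u0 would be doubled. *)
  have [u0 [d0 [xu0 u0U d0U ud0 d0b]]] := IHb.
  case: bbc => [[bc2 ebc] | [bc1 _]]; last by rewrite bc1 cU in bU.
  have e0 : e u0 d0 by apply: (open_base XE ud0); apply: contraNneq d0U => /= <-.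
  have [c1 b1] : c.1 = u0 /\ b.1 = d0.
    by apply: side_unique_exit (connect_within_base XE d0b); rewrite // e_sym.
  case: c c1 bc2 bc cU {ebc} => w [] /= c1 bc2 bc cU; last by rewrite c1.
  have u0D : u0 \in doubled X by rewrite inE (reach_within xu0) -c1 (reach_step xb bc).
  by have := side_doubled u0U; rewrite u0D.
- have [u0 [d0 [xu0 u0U d0U ud0 d0b]]] := IHb.
  exists u0, d0; split => //; apply: connect_trans d0b (connect1 _).
  by rewrite /open_within /= bc !in_setC bU cU.
Qed.

Lemma reach_side_lower c : reach X c -> c.1 \in U -> c.2 = false.
Proof.
by move=> xc cU; have := reach_side (component_root cU) xc; rewrite cU => /side_path_lower.
Qed.

Local Notation X' := (flip_config (~: U) X).

Lemma side_boundary_doubled_flip u d : u \in U -> d \notin U -> e u d -> d \in doubled X'.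
Proof.
move=> uU dU eud; have dD := side_boundary uU dU eud.
have := reach_side (component_root uU) (reach_doubled (c := upper d) dD).
rewrite /= (negbTE dU) => -[u1 [d1 [xu1 u1U d1U ud1 d1d]]].
have e1 : e u1 d1 by apply: (open_base XE ud1); apply: contraNneq d1U => /= <-.
have [? ?] := side_unique_exit u1U uU d1U dU e1 eud (connect_within_base XE d1d).
subst u1 d1; have xd : reach X' (lower d).
  apply: (connect_trans (y := lower u)).
    by apply: connect_outside_flip; rewrite setCK.
  by apply: connect1; rewrite open_flip_config /= !in_setC uU.
rewrite inE xd /=; apply: connect_trans xd _.
have := connect_within_flip d1d; rewrite !flip_in ?in_setC //=.
by rewrite (sym_connect_sym (open_edgeC _)).
Qed.

Lemma root_doubled_flip : x \notin U -> x \in doubled X'.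
Proof.
move=> xU; have xD : x \in doubled X by rewrite mem_side_root negbK in xU.
have outU v : v \in ~: U by rewrite in_setC; apply: contra xU; apply: component_root.
have := reach_doubled (c := upper x) xD.
have within : subrel (open_edge X) (open_within (~: U) X).
  by move=> a b ab; rewrite /open_within /= ab !outU.
move/(connect_subrel within)/connect_within_flip; rewrite !flip_in ?outU //= => xx.
by rewrite inE /reach connect0 (sym_connect_sym (open_edgeC _)).
Qed.

Lemma reach_flip_side c : reach X' c = reach X (flip (~: U) c).
Proof.
apply/idP/idP => [|xc].
  apply: reach_flip_config => //; first by rewrite in_setC negbK mem_side_root orNb.
  by move=> u w; rewrite !in_setC negbK; apply: side_boundary.
rewrite -[c](flipK (~: U)); apply: reach_flip_config; first exact: flip_config_sub.
- by rewrite in_setC negbK; case: (boolP (x \in U)) => //= /root_doubled_flip.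
- by move=> u w; rewrite !in_setC negbK; apply: side_boundary_doubled_flip.
- by rewrite flip_configK.
Qed.

Lemma doubled_flip_side : doubled X' = doubled X.
Proof.
apply/setP => v; rewrite !inE !reach_flip_side /flip /=.
by case: (v \in ~: U); rewrite //= andbC.
Qed.

Lemma reach_upper_flip_side y : reach X (upper y) -> reach X' (lower y).
Proof.
move=> xy; rewrite reach_flip_side flip_in // in_setC.
by apply/negP => /(reach_side_lower xy).
Qed.

End Configuration.

Definition switch X := if X \subset E then flip_config (~: side X) X else X.

Lemma switchK : involutive switch.
Proof.
move=> X; rewrite {2}/switch; case: ifPn => XE; last by rewrite /switch (negbTE XE).
by rewrite /switch flip_config_sub // /side doubled_flip_side // flip_configK.
Qed.

End Switching.

Local Open Scope ring_scope.

Section Percolation.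
Variables (R : numDomainType) (T : finType) (r : rel T) (mu : {set T} -> R).
Hypothesis wmu : weight r mu.

Lemma config_prob_ge0 X : 0 <= config_prob r mu X.
Proof.
apply: prodr_ge0 => f /wmu /andP [mu0 mu1].
by case: ifP => _ //; rewrite subr_ge0.
Qed.

Lemma perc_prob_le_involution (A B : pred {set {set T}})
    (f : {set {set T}} -> {set {set T}}) : involutive f ->
  (forall X : {set {set T}}, X \subset edges r -> A X ->
     [/\ f X \subset edges r, B (f X) & config_prob r mu (f X) = config_prob r mu X]) ->
  perc_prob r mu A <= perc_prob r mu B.
Proof.
move=> fK fAB; rewrite /perc_prob [leRHS](reindex_inj (can_inj fK)) /=.
rewrite [leLHS]big_mkcond [leRHS]big_mkcond /=; apply: ler_sum => X _.
case: ifPn => [/andP [XE AX] | _]; last by case: ifP => _ //; apply: config_prob_ge0.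
by have [-> -> ->] := fAB X XE AX.
Qed.

End Percolation.

Section FlipWeight.
Variables (R : numDomainType) (V : finType) (e : rel V) (mu : {set V * bool} -> R).
Hypothesis smu : symmetric_weight e mu.
Local Notation E := (edges (bunkbed e)).

Lemma weight_flip_edge W f : f \in E -> mu (flip_edge W f) = mu f.
Proof.
case/imset2P => a b _; rewrite inE => /andP [_ ab] ->; rewrite flip_edge_pair.
case: ifP => // /andP; case: a b ab => [u i] [v j] /orP [/andP [/eqP /= <- euv] | ].
  by move=> [uW vW]; rewrite !flip_in //; case: i; [exact: smu euv | exact/esym/smu].
by move=> /andP [/eqP /= <-]; case: i j => [] [] //= _ [uW _]; rewrite !flip_in // setUC.
Qed.

Lemma config_prob_flip W X :
  config_prob (bunkbed e) mu (flip_config W X) = config_prob (bunkbed e) mu X.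
Proof.
rewrite /config_prob (reindex_inj (can_inj (flip_edgeK W))) /=.
have flip_E f : (flip_edge W f \in E) = (f \in E).
  by apply/idP/idP => [/(flip_edge_edges W) | /flip_edge_edges //]; rewrite flip_edgeK.
by apply: eq_big => f; rewrite flip_E // => fE; rewrite mem_flip_config weight_flip_edge.
Qed.

End FlipWeight.

Theorem corollary3p7 (R : realFieldType) (V : finType) (e : rel V)
    (mu : {set V * bool} -> R) (x y : V) :
  simple_graph e -> forest e ->
  weight (bunkbed e) mu -> symmetric_weight e mu ->
  perc_prob (bunkbed e) mu (fun X => joined X (lower x) (upper y))
    <= perc_prob (bunkbed e) mu (fun X => joined X (lower x) (lower y)).
Proof.
move=> [e_sym e_irr] e_forest wmu smu.
apply: (perc_prob_le_involution wmu (switchK e_sym e_irr e_forest x)) => X XE xy.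
rewrite /switch XE; split; last exact: config_prob_flip.
- exact: flip_config_sub.
- exact: reach_upper_flip_side.
Qed.
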